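(* Let $n\ge4$, $\mathcal G\in\mathbb G^n_S$, and let $\mathcal A(\mathcal G_{cyclic})$ be the sum of the $n$ smallest edge weights of $\mathcal G_{cyclic}$ (counted among its $\binom n2$ edges). Then every Hamiltonian circuit of $\mathcal G$ has length at least $T(\mathcal G)+\mathcal A(\mathcal G_{cyclic})$, and the shortest Hamiltonian circuit of $\mathcal G$ has length at most $T(\mathcal G)$.
   Context: $\mathbb G^n_S$ is the space of complete undirected weighted graphs without loops on $V_1,\dots,V_n$ with edge weights $d_{i,j}=d_{j,i}$, identified with $\mathbb R^{\binom n2}$ with the standard inner product. $\mathcal G_{cyclic}$ is the orthogonal projection of $\mathcal G$ onto the orthogonal complement of the subspace of graphs with $d_{j,k}=\omega_j+\omega_k$ for some reals $\omega_j$. $S_S(V_j)=\sum_{k\ne j}d_{j,k}$, $T(\mathcal G)=\frac1{n-1}\sum_jS_S(V_j)$. A Hamiltonian circuit is a closed path visiting every vertex exactly once; its length is the sum of its edge weights. *)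

From HB Require Import structures.
From mathcomp Require Import all_boot all_order all_algebra all_fingroup.
Set Implicit Arguments. Unset Strict Implicit. Unset Printing Implicit Defensive.
Import Order.TTheory GRing.Theory Num.Theory.
Local Open Scope ring_scope.

(* A complete undirected weighted graph without loops on vertices 'I_n is a
   weight function d : 'I_n -> 'I_n -> R with d i j = d j i; the diagonal
   values d i i are never used. *)
Definition sym_graph (R : Type) (n : nat) (d : 'I_n -> 'I_n -> R) : Prop :=
  forall i j, d i j = d j i.

Definition ginner (R : realFieldType) (n : nat) (x y : 'I_n -> 'I_n -> R) : R :=
  \sum_(j < n) \sum_(k < n | (j < k)%N) x j k * y j k.

Definition in_W (R : realFieldType) (n : nat) (x : 'I_n -> 'I_n -> R) : Prop :=
  exists w : 'I_n -> R, forall j k : 'I_n, (j < k)%N -> x j k = w j + w k.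

(* c is the orthogonal projection of d onto the orthogonal complement of W,
   i.e. c is a graph, d - c lies in W, and c is orthogonal to W. *)
Definition is_cyclic_part (R : realFieldType) (n : nat)
    (d c : 'I_n -> 'I_n -> R) : Prop :=
  [/\ sym_graph c,
      in_W (fun j k => d j k - c j k)
    & forall w : 'I_n -> R, ginner c (fun j k => w j + w k) = 0].

Definition Ssum (R : realFieldType) (n : nat) (d : 'I_n -> 'I_n -> R) (j : 'I_n) : R :=
  \sum_(k < n | k != j) d j k.

Definition Tval (R : realFieldType) (n : nat) (d : 'I_n -> 'I_n -> R) : R :=
  (n.-1)%:R^-1 * \sum_(j < n) Ssum d j.

Definition edge_weights (R : realFieldType) (n : nat) (d : 'I_n -> 'I_n -> R) : seq R :=
  [seq d p.1 p.2 | p <- enum [pred p : 'I_n * 'I_n | (p.1 < p.2)%N]].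

Definition Asmall (R : realFieldType) (n : nat) (d : 'I_n -> 'I_n -> R) : R :=
  \sum_(x <- take n (sort <=%R (edge_weights d))) x.

(* Hamiltonian circuit: a cyclic ordering s(0), s(1), ..., s(n-1), s(0) of
   all vertices, given by a permutation s; its length is the sum of the
   weights of its n edges. *)
Definition ham_length (R : realFieldType) (n : nat) (d : 'I_n -> 'I_n -> R)
    (s : {perm 'I_n}) : R :=
  \sum_(i < n) d (s i) (s (ordS i)).

From HB Require Import structures.
From mathcomp Require Import all_boot all_order all_algebra all_fingroup.
From mathcomp Require Import zify ring lra.
Set Implicit Arguments. Unset Strict Implicit. Unset Printing Implicit Defensive.
Import Order.TTheory GRing.Theory Num.Theory.
Local Open Scope ring_scope.

(* Write d_{jk} = c_{jk} + w_j + w_k off the diagonal.  Orthogonality of c to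
   the potentials w_j + w_k means exactly that every row sum S_S of c
   vanishes.  A Hamiltonian circuit passes through every vertex twice as an
   edge endpoint, so its d-length is its c-length plus 2 sum_j w_j, and the
   same computation gives T(G) = 2 sum_j w_j.  Hence both claims are about
   c-lengths: a circuit uses n distinct edges, so its c-length is at least the
   sum A of the n smallest c-weights; and averaging the c-length over all
   relabellings of one circuit gives 0, because the vertex group acts
   transitively on ordered pairs of distinct vertices and c has zero total
   weight, so some circuit has c-length at most 0. *)

Lemma sum_perm_pair_invariant (T : finType) (V : nmodType) (f : T -> T -> V)
    (a b a' b' : T) : a != b -> a' != b' ->
  \sum_(p : {perm T}) f (p a) (p b) = \sum_(p : {perm T}) f (p a') (p b').
Proof.
move=> neq_ab neq_ab'.
pose q := (tperm a' a * tperm (tperm a' a b') b)%g.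
have q_a : q a' = a.
  rewrite permM tpermL tpermD //; last by rewrite eq_sym.
  by rewrite eq_sym -[X in X != _](tpermL a' a) (inj_eq perm_inj).
have q_b : q b' = b by rewrite permM tpermL.
rewrite -q_a -q_b [RHS](reindex_inj (mulgI q)) /=.
by apply: eq_bigr => p _; rewrite !permM.
Qed.

Lemma exists_le0_of_sum_eq0 (R : realDomainType) (T : finType) (F : T -> R)
    (x0 : T) : \sum_x F x = 0 -> exists x, F x <= 0.
Proof.
move=> sum_eq0.
case: (boolP [exists x, F x <= 0]) => [/existsP[x Fx_le0]|/existsPn F_gt0].
  by exists x.
have {}F_gt0 x : 0 < F x by rewrite ltNge F_gt0.
have F0 := psumr_eq0P (fun x _ => ltW (F_gt0 x)) sum_eq0 (i := x0) isT.
by have := F_gt0 x0; rewrite F0 ltxx.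
Qed.

Lemma sum_take_sort_le (R : numDomainType) (L s : seq R) :
  sorted <=%R L -> subseq s L -> \sum_(x <- take (size s) L) x <= \sum_(x <- s) x.
Proof.
elim: L s => [|x L IHL] [|y s] //= sorted_xL; rewrite ?big_nil //.
have sorted_L := path_sorted sorted_xL.
have x_min : all (>= x) L by exact: order_path_min le_trans sorted_xL.
case: eqP => [-> sub_sL|_ sub_ysL].
  by rewrite !big_cons lerD // IHL.
have size_lt : (size s < size L)%N := size_subseq sub_ysL.
apply: le_trans (IHL _ sorted_L sub_ysL); rewrite /= big_cons.
rewrite (take_nth 0 size_lt) -cats1 big_cat big_seq1 addrC lerD //.
by move/allP: x_min; apply; exact: mem_nth.
Qed.

Lemma sum_smallest_le (R : realDomainType) (T : eqType) (F : T -> R) (E Q : seq T) :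
  uniq E -> uniq Q -> {subset Q <= E} ->
  \sum_(x <- take (size Q) (sort <=%R (map F E))) x <= \sum_(x <- Q) F x.
Proof.
move=> uniq_E uniq_Q sub_QE.
have perm_E : perm_eq E (Q ++ [seq x <- E | x \notin Q]).
  apply: uniq_perm => //.
    rewrite cat_uniq uniq_Q filter_uniq // andbT.
    by apply/hasPn => x; rewrite mem_filter => /andP[].
  move=> x; rewrite mem_cat mem_filter.
  by case: (boolP (x \in Q)) => [/sub_QE|].
have -> : sort <=%R (map F E) = sort <=%R (map F Q ++ map F [seq x <- E | x \notin Q]).
  by apply/perm_sort_leP; rewrite -map_cat perm_map.
have := sum_take_sort_le (sort_le_sorted _)
  (subseq_sort_le (prefix_subseq (map F Q) (map F [seq x <- E | x \notin Q]))).
rewrite size_sort size_map => /le_trans; apply.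
by rewrite (perm_big _ (permEl (perm_sort _ _))) big_map.
Qed.

Lemma ordS_neq n (i : 'I_n) : (2 <= n)%N -> ordS i != i.
Proof.
move=> n_ge2; apply/eqP => /(congr1 val) /=.
have lt_in := ltn_ord i.
case: (ltnP i.+1 n) => [lt_i1n|]; first by rewrite modn_small; lia.
move=> le_ni1; have -> : i.+1 = n by lia.
by rewrite modnn; lia.
Qed.

Lemma ordSS_neq n (i : 'I_n) : (3 <= n)%N -> ordS (ordS i) != i.
Proof.
move=> n_ge3; apply/eqP => /(congr1 val) /=.
have lt_in := ltn_ord i.
case: (ltnP i.+1 n) => [lt_i1n|le_ni1].
  rewrite (modn_small lt_i1n).
  case: (ltnP i.+2 n) => [lt_i2n|]; first by rewrite modn_small; lia.
  move=> le_ni2; have -> : i.+2 = n by lia.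
  by rewrite modnn; lia.
have -> : i.+1 = n by lia.
by rewrite modnn modn_small; lia.
Qed.

Definition edge_of n (x y : 'I_n) : 'I_n * 'I_n :=
  if (x < y)%N then (x, y) else (y, x).

Lemma edge_ofP n (x y : 'I_n) : x != y -> ((edge_of x y).1 < (edge_of x y).2)%N.
Proof.
rewrite /edge_of => neq_xy; case: ifP => //= /negbT.
rewrite -leqNgt leq_eqVlt => /orP[/eqP/ord_inj eq_yx|//].
by rewrite eq_yx eqxx in neq_xy.
Qed.

Lemma edge_of_inj n (x y x' y' : 'I_n) : edge_of x y = edge_of x' y' ->
  (x = x' /\ y = y') \/ (x = y' /\ y = x').
Proof. by rewrite /edge_of; do 2 case: ifP => _; case=> -> ->; [left|right|right|left]. Qed.

Definition ham_edges n (s : {perm 'I_n}) : seq ('I_n * 'I_n) :=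
  [seq edge_of (s i) (s (ordS i)) | i <- enum 'I_n].

Lemma ham_edges_uniq n (s : {perm 'I_n}) : (3 <= n)%N -> uniq (ham_edges s).
Proof.
move=> n_ge3; rewrite map_inj_uniq ?enum_uniq // => i i'.
case/edge_of_inj => [[/perm_inj -> //]|[eq_i /perm_inj eq_i']].
by have := ordSS_neq i' n_ge3; rewrite -(perm_inj eq_i) eq_i' eqxx.
Qed.

Lemma ham_edges_ordered n (s : {perm 'I_n}) : (2 <= n)%N ->
  {subset ham_edges s <= [pred p : 'I_n * 'I_n | (p.1 < p.2)%N]}.
Proof.
move=> n_ge2 _ /mapP[i _ ->]; rewrite inE edge_ofP //.
by rewrite (inj_eq perm_inj) eq_sym ordS_neq.
Qed.

Section CyclicDecomposition.

Variables (R : realFieldType) (n : nat).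
Implicit Types (c d : 'I_n -> 'I_n -> R) (w : 'I_n -> R) (s : {perm 'I_n}).

Lemma sum_offdiag_swap (F : 'I_n -> 'I_n -> R) :
  \sum_a \sum_(b | b != a) F a b = \sum_a \sum_(b | b != a) F b a.
Proof.
under eq_bigr do rewrite big_mkcond.
rewrite exchange_big; apply: eq_bigr => a _.
by rewrite [RHS]big_mkcond; apply: eq_bigr => b _; rewrite eq_sym.
Qed.

Lemma sum_offdiag_const w :
  \sum_a \sum_(b | b != a) w a = (\sum_a w a) *+ n.-1.
Proof.
rewrite -sumrMnl; apply: eq_bigr => a _.
by rewrite sumr_const cardC1 card_ord.
Qed.

Lemma sum_offdiag_sym (F : 'I_n -> 'I_n -> R) : (forall a b, F a b = F b a) ->
  \sum_a \sum_(b | b != a) F a b = 2 * \sum_(a < n) \sum_(b < n | (a < b)%N) F a b.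
Proof.
move=> F_sym.
have split_row a : \sum_(b | b != a) F a b =
    \sum_(b < n | (a < b)%N) F a b + \sum_(b < n | (b < a)%N) F a b.
  rewrite (bigID (fun b : 'I_n => (a < b)%N)) /=.
  congr (_ + _); apply: eq_bigl => b; rewrite -(inj_eq val_inj) /=.
    by case: ltngtP.
  by case: ltngtP.
have lower_upper : \sum_(a < n) \sum_(b < n | (b < a)%N) F a b =
    \sum_(a < n) \sum_(b < n | (a < b)%N) F a b.
  under eq_bigr do rewrite big_mkcond.
  rewrite exchange_big; apply: eq_bigr => a _.
  by rewrite [RHS]big_mkcond; apply: eq_bigr => b _; rewrite F_sym.
rewrite (eq_bigr _ (fun a _ => split_row a)) big_split /= lower_upper.
by rewrite -mulr2n mulr_natl.
Qed.

Lemma ginner_potential c w : sym_graph c ->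
  ginner c (fun j k => w j + w k) = \sum_a w a * Ssum c a.
Proof.
move=> c_sym; have two_neq0 : (2 : R) != 0 by rewrite pnatr_eq0.
apply: (mulfI two_neq0).
rewrite /ginner -sum_offdiag_sym => [|a b]; last by rewrite c_sym addrC.
under eq_bigr do rewrite (eq_bigr _ (fun b _ => mulrDr _ _ _)) big_split /=.
have swap_term : \sum_a \sum_(b | b != a) c a b * w b =
    \sum_a \sum_(b | b != a) c a b * w a.
  by rewrite sum_offdiag_swap; under eq_bigr do under eq_bigr do rewrite c_sym.
have row_term : \sum_a \sum_(b | b != a) c a b * w a = \sum_a w a * Ssum c a.
  apply: eq_bigr => a _; rewrite /Ssum mulr_sumr.
  by apply: eq_bigr => b _; rewrite mulrC.
by rewrite big_split /= swap_term row_term -mulr2n mulr_natl.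
Qed.

Lemma Ssum_eq0_of_orthogonal c : sym_graph c ->
  (forall w, ginner c (fun j k => w j + w k) = 0) -> forall j, Ssum c j = 0.
Proof.
move=> c_sym c_orth j; have := c_orth (fun a => (a == j)%:R).
rewrite ginner_potential // (bigD1 j) //= eqxx mul1r big1 ?addr0 //.
by move=> a /negbTE ->; rewrite mul0r.
Qed.

Lemma is_cyclic_part_potential d c : sym_graph d -> is_cyclic_part d c ->
  exists w, forall j k, j != k -> d j k = c j k + w j + w k.
Proof.
move=> d_sym [c_sym [w dc_w] _]; exists w => j k.
case: (ltngtP j k) => [lt_jk|lt_kj|/val_inj ->]; last by rewrite eqxx.
- by have := dc_w j k lt_jk; lra.
- by have := dc_w k j lt_kj; rewrite d_sym c_sym; lra.
Qed.

Section Potential.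

Variables (d c : 'I_n -> 'I_n -> R) (w : 'I_n -> R).
Hypothesis d_potential : forall j k, j != k -> d j k = c j k + w j + w k.

Lemma Tval_potential : (2 <= n)%N -> (forall j, Ssum c j = 0) ->
  Tval d = 2 * \sum_a w a.
Proof.
move=> n_ge2 c_rows.
have Ssum_d j : Ssum d j = Ssum c j + (\sum_(k | k != j) w j + \sum_(k | k != j) w k).
  rewrite /Ssum -!big_split; apply: eq_bigr => k.
  by rewrite eq_sym => /d_potential ->; rewrite -!addrA.
rewrite /Tval (eq_bigr _ (fun j _ => Ssum_d j)) big_split /= big1 // add0r.
rewrite big_split /= (sum_offdiag_swap (fun j k => w k)) sum_offdiag_const.
have n1_neq0 : (n.-1)%:R != 0 :> R by rewrite pnatr_eq0; lia.
by rewrite -mulr_natr; field.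
Qed.

Lemma ham_length_potential s : (2 <= n)%N ->
  ham_length d s = ham_length c s + 2 * \sum_a w a.
Proof.
move=> n_ge2; rewrite /ham_length.
under eq_bigr do rewrite d_potential ?(inj_eq perm_inj) 1?eq_sym ?ordS_neq //.
have sum_w_s : \sum_i w (s i) = \sum_a w a.
  by rewrite [RHS](reindex_inj (@perm_inj _ s)).
have sum_w_sS : \sum_i w (s (ordS i)) = \sum_a w a.
  by rewrite [RHS](reindex_inj (inj_comp (@perm_inj _ s) (@ordS_inj n))).
by rewrite !big_split /= sum_w_s sum_w_sS -addrA -mulr2n mulr_natl.
Qed.

End Potential.

Lemma sum_perm_pair_eq0 c a b : (forall j, Ssum c j = 0) -> a != b ->
  \sum_(p : {perm 'I_n}) c (p a) (p b) = 0.
Proof.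
move=> c_rows neq_ab.
pose K a' b' := \sum_(p : {perm 'I_n}) c (p a') (p b').
have K_const a' b' : b' != a' -> K a' b' = K a b.
  by move=> neq_b'a'; apply: sum_perm_pair_invariant; rewrite // eq_sym.
have sum_K : \sum_a' \sum_(b' | b' != a') K a' b' = 0.
  rewrite /K; under eq_bigr do rewrite exchange_big.
  rewrite exchange_big big1 // => p _.
  transitivity (\sum_j Ssum c j); last by rewrite big1.
  rewrite [RHS](reindex_inj (@perm_inj _ p)); apply: eq_bigr => a' _.
  rewrite /Ssum [RHS](reindex_inj (@perm_inj _ p)).
  by apply: eq_bigl => b'; rewrite (inj_eq perm_inj).
have pairs_neq0 : (n.-1 * n)%N != 0%N.
  move: neq_ab (ltn_ord a) (ltn_ord b); rewrite -(inj_eq val_inj) /= => ? ? ?.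
  by rewrite muln_eq0 negb_or; apply/andP; split; lia.
move: sum_K; under eq_bigr => a' _ do
  rewrite (eq_bigr _ (fun b' => K_const a' b')) sumr_const cardC1 card_ord.
rewrite sumr_const card_ord -mulrnA => /eqP.
by rewrite mulrn_eq0 (negbTE pairs_neq0) => /eqP.
Qed.

Lemma exists_ham_length_le0 c : (2 <= n)%N -> (forall j, Ssum c j = 0) ->
  exists s, ham_length c s <= 0.
Proof.
move=> n_ge2 c_rows; apply: (exists_le0_of_sum_eq0 1%g).
rewrite exchange_big big1 // => i _.
by apply: sum_perm_pair_eq0; rewrite // eq_sym ordS_neq.
Qed.

Lemma Asmall_le_ham_length c s : (3 <= n)%N -> sym_graph c ->
  Asmall c <= ham_length c s.
Proof.
move=> n_ge3 c_sym.
have edges_sub : {subset ham_edges s <= enum [pred p : 'I_n * 'I_n | (p.1 < p.2)%N]}.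
  by move=> e /(ham_edges_ordered (ltnW n_ge3)); rewrite mem_enum.
have sum_edges : \sum_(e <- ham_edges s) c e.1 e.2 = ham_length c s.
  rewrite big_map big_enum /=; apply: eq_bigr => i _.
  by rewrite /edge_of; case: ifP => // _; exact: c_sym.
rewrite -sum_edges.
have := sum_smallest_le (fun e => c e.1 e.2) (enum_uniq _) (ham_edges_uniq s n_ge3) edges_sub.
by rewrite size_map size_enum_ord.
Qed.

End CyclicDecomposition.

Theorem corollary7 (R : realFieldType) (n : nat) (d c : 'I_n -> 'I_n -> R) :
  (4 <= n)%N -> sym_graph d -> is_cyclic_part d c ->
  (forall s : {perm 'I_n}, Tval d + Asmall c <= ham_length d s) /\
  (exists s : {perm 'I_n}, ham_length d s <= Tval d).
Proof.
move=> n_ge4 d_sym c_cyclic; have [c_sym _ c_orth] := c_cyclic.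
have [w d_potential] := is_cyclic_part_potential d_sym c_cyclic.
have c_rows := Ssum_eq0_of_orthogonal c_sym c_orth.
have n_ge2 : (2 <= n)%N by lia.
have Tval_d := Tval_potential d_potential n_ge2 c_rows.
split=> [s|].
  rewrite (ham_length_potential d_potential s n_ge2) Tval_d addrC lerD2r.
  exact: Asmall_le_ham_length (ltnW n_ge4) c_sym.
have [s c_s_le0] := exists_ham_length_le0 n_ge2 c_rows.
by exists s; rewrite (ham_length_potential d_potential s n_ge2) Tval_d gerDr.
Qed.
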